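(* In the public goods model, every MNW allocation is Pareto-optimal, satisfies Prop1, and satisfies $\frac1n$-RRS. Further, when $k\ge n$, every MNW allocation satisfies $\frac{1}{2n-1}$-Prop.
   Context: Public goods model: agents $[n]$, goods $G=[m]$, integer $0\le k\le m$, nonnegative integer additive values $v_{ij}$ ($v_i(S)=\sum_{j\in S}v_{ij}$), every agent having some good with $v_{ij}>0$. An allocation is $x\subseteq G$ with $|x|\le k$. $\mathrm{NW}(x)=(\prod_i v_i(x))^{1/n}$; an MNW allocation maximizes NW over allocations, where if all allocations have NW $0$, an MNW allocation maximizes the number of agents with positive utility and, subject to that, the product of positive utilities. $y$ Pareto-dominates $x$ if $v_i(y)\ge v_i(x)$ for all $i$ with at least one strict; $x$ is Pareto-optimal if no allocation Pareto-dominates it. $\mathrm{Prop}_i=\frac1n\max_{|y|\le k}v_i(y)$ and $\mathrm{RRS}_i=\max_{|y|\le\lfloor k/n\rfloor}v_i(y)$. For $\alpha\in(0,1]$: $x$ is $\alpha$-Prop if $v_i(x)\ge\alpha\,\mathrm{Prop}_i$ for all $i$; $x$ is $\alpha$-RRS if $v_i(x)\ge\alpha\,\mathrm{RRS}_i$ for all $i$; $x$ is Prop1 if for every agent $i$ there exist $g\in x$ and $g'\in G$ with $v_i((x\setminus\{g\})\cup\{g'\})\ge\mathrm{Prop}_i$. *)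

From mathcomp Require Import all_boot all_order all_algebra.
Set Implicit Arguments. Unset Strict Implicit. Unset Printing Implicit Defensive.
Import Order.TTheory GRing.Theory Num.Theory.

Section PublicGoods.
Variables (n m : nat).
(* agents are 'I_n, goods are 'I_m, v i j = value of agent i for good j *)
Variable v : 'I_n -> 'I_m -> nat.

Definition util (i : 'I_n) (x : {set 'I_m}) : nat := \sum_(j in x) v i j.

Definition feasible (k : nat) (x : {set 'I_m}) : bool := #|x| <= k.

(* NW(x)^n ; maximizing NW is the same as maximizing this product *)
Definition nw_prod (x : {set 'I_m}) : nat := \prod_(i < n) util i x.

Definition num_pos (x : {set 'I_m}) : nat := #|[set i : 'I_n | 0 < util i x]|.

Definition pos_prod (x : {set 'I_m}) : nat :=
  \prod_(i < n | 0 < util i x) util i x.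

Definition MNW (k : nat) (x : {set 'I_m}) : Prop :=
  feasible k x /\
  ((exists y, feasible k y /\ 0 < nw_prod y) ->
     forall y, feasible k y -> nw_prod y <= nw_prod x) /\
  ((forall y, feasible k y -> nw_prod y = 0) ->
     (forall y, feasible k y -> num_pos y <= num_pos x) /\
     (forall y, feasible k y -> num_pos y = num_pos x ->
                pos_prod y <= pos_prod x)).

Definition pareto_dominates (y x : {set 'I_m}) : Prop :=
  (forall i, util i x <= util i y) /\ (exists i, util i x < util i y).

Definition pareto_optimal (k : nat) (x : {set 'I_m}) : Prop :=
  feasible k x /\ ~ (exists y, feasible k y /\ pareto_dominates y x).

Definition maxval (k : nat) (i : 'I_n) : nat :=
  \max_(y : {set 'I_m} | feasible k y) util i y.

Local Open Scope ring_scope.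

Definition Prop_share (k : nat) (i : 'I_n) : rat := (maxval k i)%:R / n%:R.

Definition RRS (k : nat) (i : 'I_n) : nat := maxval (k %/ n) i.

Definition alpha_Prop (alpha : rat) (k : nat) (x : {set 'I_m}) : Prop :=
  forall i, (util i x)%:R >= alpha * Prop_share k i.

Definition alpha_RRS (alpha : rat) (k : nat) (x : {set 'I_m}) : Prop :=
  forall i, (util i x)%:R >= alpha * (RRS k i)%:R.

Definition Prop1 (k : nat) (x : {set 'I_m}) : Prop :=
  forall i, exists g, exists g' : 'I_m,
    g \in x /\ (util i ((x :\ g) :|: [set g']))%:R >= Prop_share k i.

End PublicGoods.

(** An MNW allocation [x] cannot be improved by a swap that drops a chosen good
    [h] and adds an unchosen good [g].  Bounding the product of the other
    agents' utilities from below by the Weierstrass product inequality, agent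
    [i]'s gain from such a swap is at most [loss i h] times its new utility, and
    these relative losses of the other agents sum to [n - 1] over the goods of
    [x].  Summing over all pairs of a good of [x] outside [T] and a good of [T]
    outside [x] gives [u_i(T) <= n u_i(x)] whenever [n |T| <= |x|] (hence
    [1/n]-RRS), and [u_i(S) <= n u_i(y)] for the best single swap [y] of [x]
    whenever [|S| <= |x|] (hence Prop1).  When [|x| < k], Pareto optimality
    makes every unchosen good worthless instead.  Combining Prop1 with RRS bounds
    [Prop_i] by [(n + 1) u_i(x)], and [n + 1 <= 2n - 1] once [n >= 2]. *)

From mathcomp Require Import all_boot all_order all_algebra.
From mathcomp Require Import lra zify.
Import Order.TTheory GRing.Theory Num.Theory.
Set Implicit Arguments. Unset Strict Implicit. Unset Printing Implicit Defensive.

Section Utility.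
Variables (n m : nat) (v : 'I_n -> 'I_m -> nat).
Implicit Types (i : 'I_n) (g h : 'I_m) (X Y : {set 'I_m}).

Lemma util_set0 i : util v i set0 = 0.
Proof. by rewrite /util big_set0. Qed.

Lemma util_set1 i g : util v i [set g] = v i g.
Proof. by rewrite /util big_set1. Qed.

Lemma util_setU1 i g X : g \notin X -> util v i (g |: X) = v i g + util v i X.
Proof. by move=> gX; rewrite /util big_setU1. Qed.

Lemma util_setID i X Y : util v i X = util v i (X :&: Y) + util v i (X :\: Y).
Proof. by rewrite /util (big_setID Y). Qed.

Lemma util_subset i X Y : X \subset Y -> util v i X <= util v i Y.
Proof. by move=> XY; rewrite [leqRHS](util_setID i Y X) (setIidPr XY) leq_addr. Qed.

Lemma mem_leq_util i g X : g \in X -> v i g <= util v i X.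
Proof. by move=> gX; rewrite -util_set1 util_subset // sub1set. Qed.

Lemma util_le_card i X b : (forall g, v i g <= b) -> util v i X <= #|X| * b.
Proof. by move=> vb; rewrite /util -sum_nat_const leq_sum. Qed.

Lemma setD1_setU1K h X : h \in X -> X :\ h :|: [set h] = X.
Proof. by move=> hX; rewrite setUC setD1K. Qed.

Lemma card_swap h g X : h \in X -> g \notin X -> #|X :\ h :|: [set g]| = #|X|.
Proof.
move=> hX gX; rewrite setUC cardsU1 in_setD1 (negbTE gX) andbF /=.
by rewrite [in RHS](cardsD1 h X) hX.
Qed.

Lemma util_swap i h g X : h \in X -> g \notin X ->
  util v i (X :\ h :|: [set g]) + v i h = util v i X + v i g.
Proof.
move=> hX gX; rewrite setUC util_setU1 ?in_setD1 ?(negbTE gX) ?andbF //.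
by rewrite [util v i X](util_setID i X [set h]) (setIidPr _) ?sub1set // util_set1; lia.
Qed.

Lemma util_swap_le i h g X : util v i (X :\ h :|: [set g]) <= util v i X + v i g.
Proof.
have DX : util v i (X :\ h) <= util v i X by apply/util_subset/subD1set.
case: (boolP (g \in X :\ h)) => gX.
  by rewrite (setUidPl _) ?sub1set // (leq_trans DX) ?leq_addr.
by rewrite setUC util_setU1 // addnC leq_add2r.
Qed.

Lemma leq_maxval k i X : feasible k X -> util v i X <= maxval v k i.
Proof. exact: leq_bigmax_cond. Qed.

Lemma maxval_exists k i : exists2 X, feasible k X & util v i X = maxval v k i.
Proof.
have f0 : feasible k (set0 : {set 'I_m}) by rewrite /feasible cards0.
case: (@arg_maxnP _ set0 (feasible k) (util v i) f0) => X fX maxX.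
exists X => //; apply/eqP; rewrite eqn_leq leq_maxval //=.
by apply/bigmax_leqP => Y fY; apply: maxX.
Qed.

End Utility.

Lemma ltn_prod (I : finType) (P : pred I) (F G : I -> nat) i0 :
  (forall i, P i -> 0 < F i <= G i) -> P i0 -> F i0 < G i0 ->
  \prod_(i | P i) F i < \prod_(i | P i) G i.
Proof.
move=> FG Pi0 lt0; rewrite (bigD1 i0) // [ltnRHS](bigD1 i0) //=.
have le_rest : \prod_(i | P i && (i != i0)) F i <= \prod_(i | P i && (i != i0)) G i.
  by apply: leq_prod => i /andP[Pi _]; case/andP: (FG i Pi).
have rest_gt0 : 0 < \prod_(i | P i && (i != i0)) F i.
  by apply: prodn_cond_gt0 => i /andP[Pi _]; case/andP: (FG i Pi).
nia.
Qed.

Local Open Scope ring_scope.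

Lemma prod_1sub_ge (R : realFieldType) (I : finType) (P : pred I) (F : I -> R) :
  (forall i, P i -> 0 <= F i <= 1) ->
  1 - \sum_(i | P i) F i <= \prod_(i | P i) (1 - F i).
Proof.
move=> F01.
suff: 1 - \sum_(i | P i) F i <= \prod_(i | P i) (1 - F i) /\ 0 <= \sum_(i | P i) F i.
  by case.
apply: (big_rec2 (fun s p => 1 - s <= p /\ 0 <= s)); first by split; lra.
move=> i s p Pi [le_p s_ge0]; have /andP[Fi_ge0 Fi_le1] := F01 i Pi; split; last lra.
have : (1 - F i) * (1 - s) <= (1 - F i) * p by apply: ler_wpM2l; lra.
nra.
Qed.

Lemma double_count (R : numDomainType) (I : finType) (A B : {set I})
    (f c M : I -> R) (C : R) :
  (forall g h, g \in B -> h \in A -> f g - f h <= c h * M g) ->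
  (forall g, g \in B -> 0 <= M g) -> \sum_(h in A) c h <= C ->
  #|A|%:R * \sum_(g in B) f g - #|B|%:R * \sum_(h in A) f h
    <= C * \sum_(g in B) M g.
Proof.
move=> fc M_ge0 sum_c.
have row g : g \in B -> #|A|%:R * f g - \sum_(h in A) f h <= C * M g.
  move=> gB; apply: le_trans (_ : (\sum_(h in A) c h) * M g <= _); last first.
    by apply: ler_wpM2r => //; apply: M_ge0.
  rewrite mulr_suml mulr_natl -(sumr_const (mem A)) -sumrB.
  by apply: ler_sum => h hA; apply: fc.
have : \sum_(g in B) (#|A|%:R * f g - \sum_(h in A) f h) <= \sum_(g in B) C * M g.
  exact: ler_sum row.
by rewrite sumrB sumr_const -mulr_sumr -mulr_sumr -[_ *+ #|B|]mulr_natl.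
Qed.

Lemma exchange_arith (R : realFieldType) (a b d w q C : R) :
  a * w - b * q <= b * C + d * w -> b + d <= a -> 0 < b -> 0 <= w -> w - q <= C.
Proof.
move=> le_ab bd_le_a b_gt0 w_ge0.
have bw : b * w <= (a - d) * w by apply: ler_wpM2r => //; lra.
rewrite -(ler_pM2l b_gt0); nra.
Qed.

Lemma ler_divn_nat (R : numFieldType) (a b d : nat) : (0 < d)%N ->
  (a <= d * b)%N -> a%:R / d%:R <= b%:R :> R.
Proof. by move=> d_gt0 le_ab; rewrite ler_pdivrMr ?ltr0n // -natrM ler_nat mulnC. Qed.

Section SwapStable.
Variables (n m : nat) (v : 'I_n -> 'I_m -> nat) (x : {set 'I_m}).
Hypothesis util_gt0 : forall j, (0 < util v j x)%N.
Hypothesis swap_nw_le : forall h g, h \in x -> g \notin x ->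
  (nw_prod v (x :\ h :|: [set g]) <= nw_prod v x)%N.

Definition loss (i : 'I_n) (h : 'I_m) : rat :=
  \sum_(j | j != i) (v j h)%:R / (util v j x)%:R.

Lemma loss_ge0 i h : 0 <= loss i h.
Proof. by apply: sumr_ge0 => j _; apply: divr_ge0. Qed.

Lemma sum_loss i : \sum_(h in x) loss i h = (n.-1)%:R.
Proof.
rewrite /loss exchange_big /= (eq_bigr (fun _ => 1)) => [|j _].
  by rewrite sumr_const cardC1 card_ord.
by rewrite -mulr_suml -natr_sum divff // pnatr_eq0 -lt0n util_gt0.
Qed.

Lemma sum_loss_le i (A : {set 'I_m}) :
  A \subset x -> \sum_(h in A) loss i h <= (n.-1)%:R.
Proof.
move=> Ax; rewrite -(sum_loss i) [leRHS](big_setID A) /= (setIidPr Ax) lerDl.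
by apply: sumr_ge0 => h _; apply: loss_ge0.
Qed.

Lemma prod_others_swap_ge i h g : h \in x -> g \notin x ->
  (\prod_(j | j != i) (util v j x)%:R) * (1 - loss i h)
    <= \prod_(j | j != i) (util v j (x :\ h :|: [set g]))%:R.
Proof.
move=> hx gx.
have ux_neq0 j : (util v j x)%:R != 0 :> rat by rewrite pnatr_eq0 -lt0n util_gt0.
apply: (@le_trans _ _ (\prod_(j | j != i) ((util v j x)%:R - (v j h)%:R))).
  have factor j : (util v j x)%:R - (v j h)%:R
      = (util v j x)%:R * (1 - (v j h)%:R / (util v j x)%:R) :> rat.
    by rewrite mulrBr mulr1 mulrCA divff ?mulr1.
  rewrite (eq_bigr _ (fun j _ => factor j)) big_split /=.
  apply: ler_wpM2l; first by apply: prodr_ge0.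
  apply: prod_1sub_ge => j _; rewrite divr_ge0 //=.
  by rewrite ler_pdivrMr ?ltr0n // mul1r ler_nat mem_leq_util.
apply: ler_prod => j _; rewrite subr_ge0 ler_nat mem_leq_util //=.
by rewrite lerBlDr -natrD ler_nat util_swap // leq_addr.
Qed.

Lemma swap_gain_le i h g : h \in x -> g \notin x ->
  (v i g)%:R - (v i h)%:R <= loss i h * (util v i (x :\ h :|: [set g]))%:R.
Proof.
move=> hx gx; set y := x :\ h :|: [set g].
pose P : rat := \prod_(j | j != i) (util v j x)%:R.
have P_gt0 : 0 < P by apply: prodr_gt0 => j _; rewrite ltr0n util_gt0.
have nw_le : (util v i y)%:R * (1 - loss i h) * P <= (util v i x)%:R * P.
  have := swap_nw_le hx gx; rewrite -(ler_nat rat) /nw_prod !natr_prod.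
  rewrite (bigD1 i) //= [leRHS](bigD1 i) //= -/P mulrAC -mulrA; apply: le_trans.
  by apply: ler_wpM2l => //; apply: prod_others_swap_ge.
have := util_swap v i hx gx; move/(congr1 (fun t => t%:R : rat)); rewrite !natrD.
by move: nw_le; rewrite ler_pM2r //; lra.
Qed.

Lemma exchange_ineq i T (M : 'I_m -> rat) :
  (forall g, g \in T :\: x -> 0 <= M g) ->
  (forall h g, h \in x :\: T -> g \in T :\: x ->
     (util v i (x :\ h :|: [set g]))%:R <= M g) ->
  #|x :\: T|%:R * (util v i (T :\: x))%:R - #|T :\: x|%:R * (util v i (x :\: T))%:R
    <= (n.-1)%:R * \sum_(g in T :\: x) M g.
Proof.
move=> M_ge0 swap_le; rewrite /util !natr_sum.
apply: (double_count (c := loss i)) => // [g h gB hA|]; last first.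
  by apply/sum_loss_le/subsetDl.
move: (gB) (hA); rewrite !inE => /andP[gx _] /andP[_ hx].
apply: le_trans (swap_gain_le i hx gx) _.
by apply: ler_wpM2l; [apply: loss_ge0 | apply: swap_le].
Qed.

Lemma exchange_gap i T (M : 'I_m -> rat) (d : nat) (C : rat) :
  (0 < #|T :\: x| -> #|T| + d <= #|x|)%N ->
  (forall g, g \in T :\: x -> 0 <= M g) ->
  (forall h g, h \in x :\: T -> g \in T :\: x ->
     (util v i (x :\ h :|: [set g]))%:R <= M g) ->
  (n.-1)%:R * \sum_(g in T :\: x) M g
    <= #|T :\: x|%:R * C + d%:R * (util v i (T :\: x))%:R ->
  0 <= C -> (util v i T)%:R <= (util v i x)%:R + C.
Proof.
move=> card_le M_ge0 swap_le sum_le C_ge0.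
rewrite (util_setID v i T x) (util_setID v i x T) setIC !natrD -addrA lerD2l.
have [T0 | T_gt0] := posnP #|T :\: x|.
  by move/eqP: T0; rewrite cards_eq0 => /eqP ->; rewrite util_set0 mulr0n addr_ge0.
rewrite -lerBlDl; apply: exchange_arith (le_trans (exchange_ineq M_ge0 swap_le) sum_le) _ _ _.
- rewrite -natrD ler_nat; have := card_le T_gt0.
  by have := cardsID x T; have := cardsID T x; rewrite setIC; lia.
- by rewrite ltr0n.
- exact: ler0n.
Qed.

Hypothesis n_gt0 : (0 < n)%N.

Lemma natr_predn_add1 : (n.-1)%:R + 1 = n%:R :> rat.
Proof. by rewrite natr1 prednK. Qed.

Lemma util_le_mul_of_card i (T : {set 'I_m}) : (#|T| * n <= #|x|)%N ->
  (util v i T <= n * util v i x)%N.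
Proof.
move=> card_le; rewrite -(ler_nat rat) natrM -natr_predn_add1 mulrDl mul1r addrC.
apply: (exchange_gap (M := fun g => (util v i x)%:R + (v i g)%:R) (d := n.-1)).
- move=> T_gt0; have T_ge1 : (0 < #|T|)%N.
    exact: leq_trans T_gt0 (subset_leq_card (subsetDl _ _)).
  nia.
- by move=> g _; apply: addr_ge0.
- by move=> h g _ _; rewrite -natrD ler_nat util_swap_le.
- have sum_M : \sum_(g in T :\: x) ((util v i x)%:R + (v i g)%:R)
      = #|T :\: x|%:R * (util v i x)%:R + (util v i (T :\: x))%:R :> rat.
    by rewrite big_split /= sumr_const mulr_natl /util !natr_sum.
  by rewrite sum_M mulrDr mulrCA.
- exact: mulr_ge0.
Qed.

Lemma exists_swap_ge i (S : {set 'I_m}) h0 : h0 \in x -> (#|S| <= #|x|)%N ->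
  exists h g, h \in x /\ (util v i S <= n * util v i (x :\ h :|: [set g]))%N.
Proof.
move=> h0x S_le.
pose swap_util (p : 'I_m * 'I_m) := util v i (x :\ p.1 :|: [set p.2]).
case: (@arg_maxnP _ (h0, h0) (fun p => p.1 \in x) swap_util h0x) => -[h g] /= hx best.
exists h, g; split=> //; set M := util v i (x :\ h :|: [set g]).
have x_le : (util v i x <= M)%N.
  by rewrite -{1}(setD1_setU1K h0x); apply: (best (h0, h0)).
rewrite -(ler_nat rat) natrM -natr_predn_add1 mulrDl mul1r addrC.
apply: le_trans
  (exchange_gap (M := fun _ => M%:R) (d := 0) (C := (n.-1)%:R * M%:R) _ _ _ _ _) _.
- by rewrite addn0.
- by move=> *; apply: ler0n.
- by move=> h' g'; rewrite inE => /andP[_ h'x] _; rewrite ler_nat; apply: (best (h', g')).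
- by rewrite sumr_const -[M%:R *+ _]mulr_natl mulr0n mul0r addr0 mulrCA.
- exact: mulr_ge0.
- by rewrite lerD2r ler_nat.
Qed.

End SwapStable.

Section MaximumNashWelfare.
Variables (n m k : nat) (v : 'I_n -> 'I_m -> nat).
Hypothesis n_gt0 : (0 < n)%N.
Hypothesis v_pos : forall i : 'I_n, exists j : 'I_m, (0 < v i j)%N.

Local Notation positive_nw_feasible :=
  (exists y, feasible k y /\ (0 < nw_prod v y)%N).

Lemma nw_dichotomy :
  positive_nw_feasible \/ (forall y, feasible k y -> nw_prod v y = 0%N).
Proof.
case: (boolP [exists y, feasible k y && (0 < nw_prod v y)%N]).
  by case/existsP => y /andP[fy py]; left; exists y.
move/existsPn => none; right => y fy; apply/eqP; rewrite -leqn0 leqNgt.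
by have := none y; rewrite fy.
Qed.

Lemma exists_positive_nw : (n <= k)%N -> positive_nw_feasible.
Proof.
move=> nk; pose fav i := xchoose (v_pos i).
exists (fav @: setT); split.
  by rewrite /feasible (leq_trans (leq_imset_card _ _)) // cardsT card_ord.
rewrite /nw_prod prodn_gt0 // => i.
by rewrite (leq_trans (xchooseP (v_pos i))) // mem_leq_util // imset_f.
Qed.

Lemma pareto_optimal_util_le x : pareto_optimal v k x -> (#|x| < k)%N ->
  forall i T, (util v i T <= util v i x)%N.
Proof.
move=> [_ undominated] x_lt_k i T.
have worthless g j : g \notin x -> v j g = 0%N.
  move=> gx; apply/eqP; rewrite -leqn0 leqNgt; apply/negP => vg_gt0.
  apply: undominated; exists (g |: x); split; first by rewrite /feasible cardsU1 gx.
  split=> [j'|]; first by rewrite util_setU1 // leq_addl.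
  by exists j; rewrite util_setU1 // -[ltnLHS]add0n ltn_add2r.
have -> : util v i T = util v i (T :&: x).
  rewrite [LHS](util_setID v i T x) [util v i (T :\: x)]/util big1 ?addn0 //.
  by move=> g; rewrite inE => /andP[gx _]; apply: worthless.
by apply/util_subset/subsetIr.
Qed.

Variable x : {set 'I_m}.
Hypothesis x_MNW : MNW v k x.

Lemma MNW_nw_max : positive_nw_feasible ->
  forall y, feasible k y -> (nw_prod v y <= nw_prod v x)%N.
Proof. by case: x_MNW => _ []. Qed.

Lemma MNW_util_gt0 : positive_nw_feasible ->
  forall j, (0 < util v j x)%N.
Proof.
move=> pos j; case: (pos) => y [fy py]; rewrite lt0n; apply/eqP => u0.
have := MNW_nw_max pos fy; rewrite [X in (_ <= X)%N]/nw_prod (bigD1 j) //= u0 mul0n.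
by rewrite leqn0 => /eqP nw0; rewrite nw0 in py.
Qed.

Lemma MNW_swap_nw_le : positive_nw_feasible ->
  forall h g, h \in x -> g \notin x ->
  (nw_prod v (x :\ h :|: [set g]) <= nw_prod v x)%N.
Proof.
move=> pos h g hx gx; apply: MNW_nw_max => //.
by rewrite /feasible card_swap //; case: x_MNW.
Qed.

Lemma MNW_pareto_optimal : pareto_optimal v k x.
Proof.
split; first by case: x_MNW.
case=> y [fy [le_xy [i0 lt_xy]]].
case: nw_dichotomy => [pos | zero].
  have := MNW_nw_max pos fy; rewrite leqNgt => /negP; apply.
  by apply: (ltn_prod (P := predT) (i0 := i0)) => // j _; rewrite MNW_util_gt0 ?le_xy.
have [num_max prod_max] := x_MNW.2.2 zero.
have pos_sub : [set j | 0 < util v j x]%N \subset [set j | 0 < util v j y]%N.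
  by apply/subsetP => j; rewrite !inE => /leq_trans; apply.
have same_num : num_pos v y = num_pos v x.
  by apply/eqP; rewrite eqn_leq num_max // subset_leq_card.
have same_pos j : (0 < util v j y)%N = (0 < util v j x)%N.
  have card_eq : #|[set j | 0 < util v j x]%N| = #|[set j | 0 < util v j y]%N|.
    exact: esym same_num.
  by have /(_ j) := elimT (subset_cardP card_eq) pos_sub; rewrite !inE.
have := prod_max y fy same_num; rewrite leqNgt => /negP; apply.
rewrite /pos_prod (eq_bigl _ _ same_pos).
apply: (ltn_prod (i0 := i0)) => // [j pj|]; first by rewrite pj le_xy.
by rewrite -same_pos (leq_ltn_trans _ lt_xy).
Qed.

Lemma MNW_neq0 : (0 < k)%N -> x != set0.
Proof.
move=> k_gt0; apply/eqP => x0.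
have u0 j : util v j x = 0%N by rewrite x0 util_set0.
have i : 'I_n := Ordinal n_gt0.
case: nw_dichotomy => [pos | zero]; first by have := MNW_util_gt0 pos i; rewrite u0.
have [g vg] := v_pos i.
have := (x_MNW.2.2 zero).1 [set g]; rewrite /feasible cards1 => /(_ k_gt0).
have -> : num_pos v x = 0%N.
  by apply/eqP; rewrite cards_eq0; apply/eqP/setP => j; rewrite !inE u0.
by rewrite leqn0 cards_eq0 => /eqP/setP/(_ i); rewrite !inE util_set1 vg.
Qed.

Lemma MNW_RRS_le i : (RRS v k i <= n * util v i x)%N.
Proof.
rewrite /RRS; have [T fT <-] := maxval_exists v (k %/ n) i.
move: fT; rewrite /feasible leq_divRL // => fT.
have [T0 | T_gt0] := posnP #|T|.
  by move/eqP: T0; rewrite cards_eq0 => /eqP ->; rewrite util_set0.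
have pos := exists_positive_nw (leq_trans (leq_pmull _ T_gt0) fT).
have [Tx | xT] := leqP (#|T| * n) #|x|.
  by apply: util_le_mul_of_card => //; [apply: MNW_util_gt0 | apply: MNW_swap_nw_le].
apply: leq_trans (pareto_optimal_util_le MNW_pareto_optimal _ i T) (leq_pmull _ n_gt0).
exact: leq_trans xT fT.
Qed.

Lemma MNW_maxval_le_swap i : (0 < k)%N ->
  exists h g, h \in x /\ (maxval v k i <= n * util v i (x :\ h :|: [set g]))%N.
Proof.
move=> k_gt0; have [S fS <-] := maxval_exists v k i.
have [x0 | [h0 h0x]] := set_0Vmem x; first by have := MNW_neq0 k_gt0; rewrite x0 eqxx.
have [k_le_n | n_lt_k] := leqP k n.
  case: (@arg_maxnP _ h0 predT (v i) erefl) => g' _ best.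
  have best_g g : (v i g <= v i g')%N by apply: best.
  exists h0, g'; split=> //; apply: leq_trans (util_le_card S best_g) _.
  apply: leq_mul; first exact: leq_trans fS k_le_n.
  by apply: mem_leq_util; rewrite !inE eqxx orbT.
have pos := exists_positive_nw (ltnW n_lt_k).
have [S_le_x | x_lt_S] := leqP #|S| #|x|.
  by apply: exists_swap_ge h0x S_le_x; [apply: MNW_util_gt0 | apply: MNW_swap_nw_le | ].
exists h0, h0; rewrite setD1_setU1K //; split=> //.
apply: leq_trans (pareto_optimal_util_le MNW_pareto_optimal _ i S) (leq_pmull _ n_gt0).
exact: leq_trans x_lt_S fS.
Qed.

Lemma MNW_maxval_le i : (n <= k)%N -> (maxval v k i <= n * (2 * n - 1) * util v i x)%N.
Proof.
have RRS_le := MNW_RRS_le i; move=> nk.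
have [n1 | n_neq1] := eqVneq n 1%N.
  have -> : (2 * n - 1 = 1)%N by rewrite n1.
  by move: RRS_le; rewrite /RRS (_ : (k %/ n = k)%N) ?muln1 // n1 divn1.
have [h [g [_ le_swap]]] := MNW_maxval_le_swap i (leq_trans n_gt0 nk).
have vg : (v i g <= n * util v i x)%N.
  apply: leq_trans RRS_le; rewrite /RRS -util_set1 leq_maxval //.
  by rewrite /feasible cards1 divn_gt0.
apply: leq_trans le_swap _; rewrite -mulnA leq_pmul2l //.
apply: leq_trans (util_swap_le v i h g x) _.
apply: leq_trans (leq_add (leqnn _) vg) _.
rewrite -[X in (X + _ <= _)%N]mul1n -mulnDl leq_mul //; lia.
Qed.

Lemma MNW_Prop1 : (0 < k)%N -> Prop1 v k x.
Proof.
move=> k_gt0 i; have [h [g [hx le_swap]]] := MNW_maxval_le_swap i k_gt0.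
by exists h, g; split=> //; apply: ler_divn_nat.
Qed.

Lemma MNW_RRS : alpha_RRS v (1 / n%:R) k x.
Proof. by move=> i; rewrite mul1r mulrC ler_divn_nat ?MNW_RRS_le. Qed.

Lemma MNW_Prop : (n <= k)%N -> alpha_Prop v (1 / (2 * n - 1)%N%:R) k x.
Proof.
move=> nk i; rewrite /Prop_share mul1r mulrC -mulrA -invfM -natrM.
by rewrite ler_divn_nat ?mulnA ?MNW_maxval_le // muln_gt0 n_gt0 subn_gt0; lia.
Qed.

End MaximumNashWelfare.

Theorem theorem5 (n m k : nat) (v : 'I_n -> 'I_m -> nat)
  (hn : (0 < n)%N) (hk : (k <= m)%N)
  (hv : forall i : 'I_n, exists j : 'I_m, (0 < v i j)%N)
  (x : {set 'I_m}) (hx : MNW v k x) :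
  pareto_optimal v k x /\
  ((0 < k)%N -> Prop1 v k x) /\
  alpha_RRS v (1 / n%:R) k x /\
  ((n <= k)%N -> alpha_Prop v (1 / (2 * n - 1)%N%:R) k x).
Proof.
split; first exact: MNW_pareto_optimal.
split; first exact: MNW_Prop1.
split; first exact: MNW_RRS.
exact: MNW_Prop.
Qed.
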